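(* Let $r\ge3$, $n>r$, and $1<i<r$. In $T$ define $\zeta(T_{s_j})=(vF_jE_j-1)1_\omega$ for $1\le j<r$ and $\zeta(T_\rho)=(E_rE_{r+1}\cdots E_{n-1})(E_{r-1}E_{r-2}\cdots E_1)E_n1_\omega$. Then $\zeta(T_{s_{i-1}})\zeta(T_\rho)=\zeta(T_\rho)\zeta(T_{s_i})$.
   Context: $T$ is the $\mathbb{Q}(v)$-algebra with generators $E_i,F_i,K_i^{\pm1}$ ($1\le i\le n$, indices mod $n$) and relations: $K_iK_j=K_jK_i$; $K_iK_i^{-1}=K_i^{-1}K_i=1$; $K_iE_j=v^{\epsilon^+(i,j)}E_jK_i$; $K_iF_j=v^{-\epsilon^+(i,j)}F_jK_i$ ($\epsilon^+(i,j)=1$ if $j=i$, $-1$ if $j\equiv i-1\pmod n$, $0$ otherwise); $E_iF_j-F_jE_i=\delta_{ij}\frac{K_iK_{i+1}^{-1}-K_i^{-1}K_{i+1}}{v-v^{-1}}$; $E_iE_j=E_jE_i$, $F_iF_j=F_jF_i$ if $i-j\not\equiv\pm1$; $E_i^2E_j-(v+v^{-1})E_iE_jE_i+E_jE_i^2=0$, $F_i^2F_j-(v+v^{-1})F_iF_jF_i+F_jF_i^2=0$ if $i-j\equiv\pm1\pmod n$; $K_1\cdots K_n=v^r$; $\prod_{j=0}^r(K_i-v^j)=0$. For a composition $\lambda$ of $r$ into $n$ nonnegative parts, $1_\lambda=\prod_{i=1}^n\prod_{s=1}^{\lambda_i}\frac{K_iv^{-s+1}-K_i^{-1}v^{s-1}}{v^s-v^{-s}}$;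 $\omega=(1,\dots,1,0,\dots,0)$ with $r$ ones and $n-r$ zeros. *)

From HB Require Import structures.
From mathcomp Require Import all_boot all_order all_algebra.
From mathcomp Require Import fraction.
Set Implicit Arguments. Unset Strict Implicit. Unset Printing Implicit Defensive.
Import Order.TTheory GRing.Theory Num.Theory.
Local Open Scope ring_scope.

Definition Qv : fieldType := {fraction {poly rat}}.
Definition qv : Qv := tofrac ('X : {poly rat}).

Definition epsp (n i j : nat) : int :=
  if (j == i %[mod n])%N then 1
  else if (j.+1 == i %[mod n])%N then -1 else 0.

(* Defining relations of T, for families E F K Kinv : nat -> A of elements of a
   Q(v)-algebra A indexed by nat and n-periodic (index i stands for i mod n). *)
Definition T_rels (A : algType Qv) (n r : nat) (E F K Ki : nat -> A) : Prop :=
  (forall k, E (k + n)%N = E k /\ F (k + n)%N = F k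
                 /\ K (k + n)%N = K k /\ Ki (k + n)%N = Ki k) /\
      (forall i j, K i * K j = K j * K i) /\
      (forall i, K i * Ki i = 1 /\ Ki i * K i = 1) /\
      (forall i j, K i * E j = (qv ^ epsp n i j) *: (E j * K i)
                /\ K i * F j = (qv ^ (- epsp n i j)) *: (F j * K i)) /\
      (forall i j, E i * F j - F j * E i =
          if (i == j %[mod n])%N then
            (qv - qv^-1)^-1 *: (K i * Ki i.+1 - Ki i * K i.+1)
          else 0) /\
      (forall i j, ~~ (i == j.+1 %[mod n])%N -> ~~ (j == i.+1 %[mod n])%N ->
          E i * E j = E j * E i /\ F i * F j = F j * F i) /\
      (forall i j, ((i == j.+1 %[mod n]) || (j == i.+1 %[mod n]))%N ->
          E i * E i * E j - (qv + qv^-1) *: (E i * E j * E i) + E j * E i * E i = 0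
       /\ F i * F i * F j - (qv + qv^-1) *: (F i * F j * F i) + F j * F i * F i = 0) /\
      \prod_(1 <= i < n.+1) K i = (qv ^+ r)%:A /\
      (forall i, \prod_(0 <= j < r.+1) (K i - (qv ^+ j)%:A) = 0).

Definition one_lam (A : algType Qv) (n : nat) (K Ki : nat -> A) (lam : nat -> nat) : A :=
  \prod_(1 <= i < n.+1) \prod_(1 <= s < (lam i).+1)
     ((qv ^ (s%:Z) - qv ^ (- s%:Z))^-1 *:
        (qv ^ (1 - s%:Z) *: K i - qv ^ (s%:Z - 1) *: Ki i)).

Definition omega (r : nat) : nat -> nat := fun i => if (1 <= i <= r)%N then 1%N else 0%N.

Definition one_omega (A : algType Qv) (n r : nat) (K Ki : nat -> A) : A :=
  one_lam n K Ki (omega r).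

Definition zeta_s (A : algType Qv) (n r : nat) (E F K Ki : nat -> A) (j : nat) : A :=
  (qv *: (F j * E j) - 1) * one_omega n r K Ki.

Definition zeta_rho (A : algType Qv) (n r : nat) (E K Ki : nat -> A) : A :=
  (\prod_(r <= k < n) E k) * (\prod_(k <- rev (iota 1 r.-1)) E k)
    * E n * one_omega n r K Ki.

From HB Require Import structures.
From mathcomp Require Import all_boot all_order all_algebra.
From mathcomp Require Import fraction qpoly zify.
Set Implicit Arguments. Unset Strict Implicit. Unset Printing Implicit Defensive.
Import GRing.Theory.
Local Open Scope ring_scope.

(* Everything is a weight computation.  Each [K_i] is annihilated by
   [\prod_(j <= r) (K_i - v^j)], so the Lagrange idempotents of the commuting
   [K_i] split the algebra into joint eigenspaces.  On the one of weight [mu],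
   [1_omega] acts by the product of the quantum integers [[mu_j]], [j <= r],
   which vanishes unless [mu_j >= 1] for [j <= r]; as [\prod_i K_i = v^r]
   forces [\sum_i mu_i = r], only [mu = omega] survives.  So [1_omega] has
   weight [omega] and fixes every vector of weight [omega].  The word of
   [zeta(T_rho)] has weight zero, hence both sides lose their inner [1_omega],
   and after moving [F_(i-1) E_(i-1)] and [F_i E_i] past the letters they commute
   with, what is left is a rank-two identity on [W = E_(i-2) ... E_1 E_n 1_omega],
   whose weight is [omega + eps_n - eps_(i-1)].  There, using
   [[E_j, F_j] = [mu_j - mu_(j+1)]] on vectors of weight [mu] and the vanishing of
   vectors having a weight entry [-1] ([v^-1] is not a root of the polynomial
   of [K_j]), both [F_(i-1) E_(i-1) E_i E_(i-1) W] and [E_i E_(i-1) F_i E_i W]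
   equal [E_(i-1) E_i W]. *)

Lemma qv_neq0 : qv != 0.
Proof. by rewrite tofrac_eq0 polyX_eq0. Qed.

Lemma qvXn_inj : injective (fun k : nat => qv ^+ k).
Proof.
move=> i j /eqP; rewrite /qv -!rmorphXn tofrac_eq => /eqP eXn.
by have := congr1 (fun p : {poly rat} => size p) eXn; rewrite !size_polyXn => -[].
Qed.

Lemma qvV_neq_qvXn m : qv^-1 != qv ^+ m.
Proof.
apply/eqP => /(congr1 ( *%R qv)); rewrite mulfV ?qv_neq0 // -exprS -(expr0 qv).
by move/qvXn_inj.
Qed.

Lemma qv_subV_neq0 : qv - qv^-1 != 0.
Proof. by rewrite subr_eq0 eq_sym; have := qvV_neq_qvXn 1; rewrite expr1. Qed.

Definition qint (m : int) : Qv := (qv ^ m - qv ^ (- m)) / (qv - qv^-1).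

Lemma qint0 : qint 0 = 0.
Proof. by rewrite /qint oppr0 subrr mul0r. Qed.

Lemma qint1 : qint 1 = 1.
Proof. by rewrite /qint expr1z exprN1 divff // qv_subV_neq0. Qed.

Lemma qintN1 : qint (-1) = -1.
Proof. by rewrite /qint opprK expr1z exprN1 -opprB mulNr divff // qv_subV_neq0. Qed.

Lemma eqn_mod_range n i j : (0 < i <= n)%N -> (0 < j <= n)%N ->
  (i == j %[mod n])%N = (i == j).
Proof.
wlog le_ji : i j / (j <= i)%N.
  move=> hw hi hj; case: (leqP j i) => [|/ltnW] h; first exact: hw.
  by rewrite eq_sym [i == j]eq_sym hw.
move=> /andP[_ i_n] /andP[j0 _]; rewrite eqn_mod_dvd //.
apply/idP/eqP => [dvd_n|->]; last by rewrite subnn dvdn0.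
by case: (posnP (i - j)) => [|pos]; [|have := dvdn_leq pos dvd_n]; lia.
Qed.

Lemma eqn_modS_range n i j : (0 < i <= n)%N -> (0 < j <= n)%N ->
  (i == j.+1 %[mod n])%N = (i == j.+1) || (i == 1%N) && (j == n).
Proof.
move=> hi hj; have [jn|nj|->] := ltngtP j n; last 2 first.
- by lia.
- by rewrite -add1n modnDr eqn_mod_range ?eqxx ?andbT; lia.
by rewrite eqn_mod_range // andbF orbF.
Qed.

Lemma epspE n i j : (1 < n)%N -> (0 < i <= n)%N -> (0 < j <= n)%N ->
  epsp n i j = (i == j)%:Z - ((i == j.+1) || (i == 1%N) && (j == n))%:Z.
Proof.
move=> n1 hi hj; rewrite /epsp eqn_mod_range // [(j.+1 %% n == _)%N]eq_sym.
rewrite eqn_modS_range // [j == i]eq_sym.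
by case: ifP => [/eqP->|_]; [|case: ifP]; lia.
Qed.

Lemma sum_omega n r : (r <= n)%N -> (\sum_(1 <= l < n.+1) omega r l)%N = r.
Proof.
move=> rn; rewrite (big_cat_nat (n := r.+1)) //= ?ltnS //.
rewrite (eq_big_nat _ _ (F2 := fun=> 1%N)) => [|l ?]; last by rewrite /omega; case: ifP; lia.
rewrite [X in (_ + X)%N]big1_seq => [|l]; last by rewrite mem_index_iota /omega; case: ifP; lia.
by rewrite sum_nat_const_nat muln1 addn0 subn1.
Qed.

Lemma eq_omega_of_sum n r (mu : nat -> nat) : (r <= n)%N ->
  (forall j, (0 < j <= r)%N -> (0 < mu j)%N) ->
  (\sum_(1 <= l < n.+1) mu l)%N = r ->
  forall i, (0 < i <= n)%N -> mu i = omega r i.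
Proof.
move=> rn mu_pos sum_mu i hi.
have le_omega l : (omega r l <= mu l)%N by rewrite /omega; case: ifP => // /mu_pos.
have : (\sum_(1 <= l < n.+1) (mu l - omega r l) == 0)%N.
  by rewrite sumnB // sum_mu sum_omega // subnn.
rewrite sum_nat_seq_eq0 => /allP /(_ i); rewrite mem_index_iota ltnS hi => /(_ isT) /eqP.
by have := le_omega i; lia.
Qed.

Lemma comm_horner_alg (R : nzRingType) (B : algType R) (a b : B) (p : {poly R}) :
  GRing.comm a b -> GRing.comm a (horner_alg b p).
Proof.
by move=> ab; apply: commr_horner => // i; rewrite coef_map /= comm_alg.
Qed.

Lemma prod_mul_eigen (R : comNzRingType) (B : algType R) (I : eqType) (s : seq I)
    (f : I -> B) (c : I -> R) (y : B) :
  (forall t, t \in s -> f t * y = c t *: y) ->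
  (\prod_(t <- s) f t) * y = (\prod_(t <- s) c t) *: y.
Proof.
elim: s => [|t s IH] h; first by rewrite !big_nil mul1r scale1r.
rewrite !big_cons -mulrA IH => [|t' t's]; last by apply: h; rewrite inE t's orbT.
by rewrite -scalerAr h ?mem_head // scalerA mulrC.
Qed.

Lemma rev_iota_split a m : (0 < a)%N -> (a < m)%N ->
  rev (iota 1 m) = rev (iota a.+2 (m - a.+1)) ++ [:: a.+1; a] ++ rev (iota 1 a.-1).
Proof.
move=> a0 am; have -> : iota 1 m = iota 1 (a.-1 + (2 + (m - a.+1))) by congr iota; lia.
rewrite !iotaD !rev_cat -catA (_ : (1 + a.-1 = a)%N); last by lia.
by rewrite addn2.
Qed.

Lemma commr_mul2l (R : pzSemiRingType) (x1 x2 y z : R) :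
  GRing.comm (x1 * x2) y -> x1 * (x2 * (y * z)) = y * (x1 * (x2 * z)).
Proof. by move=> c; rewrite !mulrA c !mulrA. Qed.

Section CartanWeights.
Variables (A : algType Qv) (n r : nat) (K Ki : nat -> A).

Definition has_weight (lam : nat -> int) (y : A) :=
  forall i, (0 < i <= n)%N -> K i * y = qv ^ lam i *: y.

Lemma has_weight_eq lam lam' y : has_weight lam y ->
  (forall i, (0 < i <= n)%N -> lam i = lam' i) -> has_weight lam' y.
Proof. by move=> hy e i hi; rewrite -e // hy. Qed.

Lemma has_weight_lin lam (c : Qv) y z :
  has_weight lam y -> has_weight lam z -> has_weight lam (c *: y - z).
Proof.
move=> hy hz i hi; rewrite mulrBr -scalerAr hy // hz // scalerBr !scalerA.
by rewrite mulrC.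
Qed.

Hypothesis Ki_K : forall i, Ki i * K i = 1.

Lemma has_weightKi lam y i : has_weight lam y -> (0 < i <= n)%N ->
  Ki i * y = qv ^ (- lam i) *: y.
Proof.
move=> hy hi; have {2}-> : y = qv ^ lam i *: (Ki i * y).
  by rewrite scalerAr -hy // mulrA Ki_K mul1r.
by rewrite scalerA -expfzDr ?qv_neq0 // addNr expr0z scale1r.
Qed.

Hypothesis K_root : forall i, \prod_(0 <= j < r.+1) (K i - (qv ^+ j)%:A) = 0.

Lemma has_weight_eq0 lam y k : has_weight lam y -> (0 < k <= n)%N -> lam k = -1 -> y = 0.
Proof.
move=> hy hk lam_k.
have : (\prod_(0 <= j < r.+1) (K k - (qv ^+ j)%:A)) * y
       = (\prod_(0 <= j < r.+1) (qv^-1 - qv ^+ j)) *: y.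
  by apply: prod_mul_eigen => j _; rewrite mulrBl hy // lam_k exprN1 mulr_algl scalerBl.
rewrite K_root mul0r => /esym/eqP; rewrite scaler_eq0 prodf_seq_eq0.
by case/orP => [/hasP[j _]|/eqP //]; rewrite subr_eq0 (negPf (qvV_neq_qvXn j)).
Qed.

(* By [K_root], [K l] is diagonalisable with eigenvalues among [v^0, ..., v^r];
   [Kidem l k] is its spectral idempotent for [v^k]. *)
Definition Kidem l (k : 'I_r.+1) : A :=
  horner_alg (K l) (tnth (r.+1.-lagrange (fun j : nat => qv ^+ j)) k).

Hypothesis K_comm : forall i j, K i * K j = K j * K i.

Lemma Kidem_commK j l k : GRing.comm (K j) (Kidem l k).
Proof. exact/comm_horner_alg/K_comm. Qed.

Lemma sum_Kidem l : \sum_(k < r.+1) Kidem l k = 1.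
Proof.
have size1 : (size (1%R : {poly Qv}) <= r.+1)%N by rewrite size_poly1.
have := lagrange_gen (ltn0Sn r) qvXn_inj size1.
move/(congr1 (horner_alg (K l))); rewrite rmorph1 rmorph_sum => ->.
by apply: eq_bigr => k _; rewrite hornerC mul1r.
Qed.

Lemma K_Kidem l k : K l * Kidem l k = qv ^+ k *: Kidem l k.
Proof.
have K_subC c : K l - c%:A = horner_alg (K l) ('X - c%:P).
  by rewrite rmorphB /= horner_algX horner_algC.
have K_root_poly : horner_alg (K l) (\prod_(j < r.+1) ('X - (qv ^+ j)%:P)) = 0.
  by rewrite rmorph_prod -(K_root l) big_mkord; apply: eq_bigr => j _; rewrite K_subC.
apply/eqP; rewrite -subr_eq0 -mulr_algl -mulrBl K_subC /Kidem -rmorphM.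
rewrite (lagrangeE (ltn0Sn r) qvXn_inj) /= mulrCA.
have -> : ('X - (qv ^+ k)%:P) * \prod_(j < r.+1 | j != k) ('X - (qv ^+ j)%:P)
          = \prod_(j < r.+1) ('X - (qv ^+ j)%:P) by rewrite [RHS](bigD1 k).
by rewrite rmorphM /= K_root_poly mulr0.
Qed.

Lemma eq0_Kidem_prod m y :
  (forall mu : nat -> 'I_r.+1, y * \prod_(1 <= l < m.+1) Kidem l (mu l) = 0) -> y = 0.
Proof.
elim: m y => [|m IH] y h; first by have := h (fun=> ord0); rewrite big_geq // mulr1.
apply: IH => mu; set P := \prod_(1 <= l < m.+1) _.
rewrite -[y * P]mulr1 -(sum_Kidem m.+1) mulr_sumr big1 // => k _.
have := h (fun l => if l == m.+1 then k else mu l).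
rewrite big_nat_recr //= eqxx mulrA => <-; congr (_ * _ * _).
by apply: eq_big_nat => l /andP[_ lm]; rewrite ltn_eqF.
Qed.

Lemma has_weight_Kidem_prod (mu : nat -> 'I_r.+1) :
  has_weight (fun l => (mu l)%:Z) (\prod_(1 <= l < n.+1) Kidem l (mu l)).
Proof.
move=> j /andP[j0 jn].
have cKj : GRing.comm (K j) (\prod_(1 <= l < j) Kidem l (mu l)).
  by apply: commr_prod => l _; apply: Kidem_commK.
rewrite (big_cat_nat (n := j)) ?leqW //= (big_ltn (m := j)) ?ltnS //= mulrA cKj -!mulrA.
by rewrite [K j * (_ * _)]mulrA K_Kidem -scalerAl -scalerAr.
Qed.

Definition one_lam_at (lam : nat -> nat) (mu : nat -> int) : Qv :=
  \prod_(1 <= i < n.+1) \prod_(1 <= s < (lam i).+1)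
     ((qv ^ (s%:Z) - qv ^ (- s%:Z))^-1 *
        (qv ^ (1 - s%:Z) * qv ^ mu i - qv ^ (s%:Z - 1) * qv ^ (- mu i))).

Lemma one_lam_weight lam mu y : has_weight mu y ->
  one_lam n K Ki lam * y = one_lam_at lam mu *: y.
Proof.
move=> hy; apply: prod_mul_eigen => i; rewrite mem_index_iota => hi.
apply: prod_mul_eigen => s _.
by rewrite -scalerAl mulrBl -!scalerAl hy // (has_weightKi hy hi) !scalerA -scalerBl scalerA.
Qed.

Lemma one_omega_at_omega : one_lam_at (omega r) (fun i => (omega r i)%:Z) = 1.
Proof.
apply: big1_seq => i _; rewrite /omega; case: ifP => _; last by rewrite big_geq.
by rewrite big_nat1 subrr expr0z !mul1r expr1z exprN1 mulVf // qv_subV_neq0.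
Qed.

Lemma one_omega_at_eq0 mu j : (0 < j <= r)%N -> (r <= n)%N -> mu j = 0 ->
  one_lam_at (omega r) mu = 0.
Proof.
move=> hj rn mu_j0; apply/eqP; rewrite prodf_seq_eq0; apply/hasP; exists j.
  by rewrite mem_index_iota; lia.
by rewrite /omega hj big_nat1 mu_j0 oppr0 !subrr mulr0 eqxx.
Qed.

Lemma mul_one_omega y :
  has_weight (fun i => (omega r i)%:Z) y -> one_omega n r K Ki * y = y.
Proof. by move=> hy; rewrite /one_omega (one_lam_weight _ hy) one_omega_at_omega scale1r. Qed.

Hypothesis K_prod : \prod_(1 <= i < n.+1) K i = (qv ^+ r)%:A.

Lemma sum_weight (mu : nat -> nat) y : has_weight (fun l => (mu l)%:Z) y -> y != 0 ->
  (\sum_(1 <= l < n.+1) mu l)%N = r.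
Proof.
move=> hy y_neq0; apply: qvXn_inj => /=.
have : (\prod_(1 <= l < n.+1) K l) * y = (\prod_(1 <= l < n.+1) qv ^+ mu l) *: y.
  by apply: prod_mul_eigen => l; rewrite mem_index_iota; apply: hy.
rewrite K_prod mulr_algl prodrXr => /eqP; rewrite -subr_eq0 -scalerBl scaler_eq0.
by rewrite (negPf y_neq0) orbF subr_eq0 => /eqP.
Qed.

Lemma has_weight_one_omega : (r <= n)%N ->
  has_weight (fun i => (omega r i)%:Z) (one_omega n r K Ki).
Proof.
move=> rn i hi; apply/eqP; rewrite -subr_eq0; apply/eqP.
apply: (@eq0_Kidem_prod n) => mu; set e := \prod_(1 <= l < n.+1) Kidem l (mu l).
have e_wt : has_weight (fun l => (mu l)%:Z) e := has_weight_Kidem_prod mu.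
rewrite mulrBl -mulrA -scalerAl /one_omega (one_lam_weight _ e_wt) -scalerAr (e_wt i hi).
rewrite !scalerA -scalerBl.
have [->|e_neq0] := eqVneq e 0; first by rewrite scaler0.
have sum_mu := sum_weight e_wt e_neq0.
have [/hasP[j]|/hasPn mu_pos] := boolP (has (fun j => mu j == 0%N :> nat) (index_iota 1 r.+1)).
  rewrite mem_index_iota => hj /eqP mu_j0.
  by rewrite (@one_omega_at_eq0 _ j) ?mu_j0 // mul0r mulr0 subrr scale0r.
rewrite (eq_omega_of_sum rn _ sum_mu hi) => [|j hj]; first by rewrite mulrC subrr scale0r.
by rewrite lt0n; apply: mu_pos; rewrite mem_index_iota.
Qed.

End CartanWeights.

Section Weights.
Variables (A : algType Qv) (n r : nat) (E F K Ki : nat -> A).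
Hypothesis HT : T_rels n r E F K Ki.
Hypothesis n_gt1 : (1 < n)%N.

Let K_comm i j : K i * K j = K j * K i.
Proof. by case: HT => _ []. Qed.
Let Ki_K i : Ki i * K i = 1.
Proof. by case: HT => _ [_ [/(_ i) []]]. Qed.
Let K_E i j : K i * E j = qv ^ epsp n i j *: (E j * K i).
Proof. by case: HT => _ [_ [_ [/(_ i j) []]]]. Qed.
Let K_F i j : K i * F j = qv ^ (- epsp n i j) *: (F j * K i).
Proof. by case: HT => _ [_ [_ [/(_ i j) []]]]. Qed.
Let E_F i j : E i * F j - F j * E i =
  if (i == j %[mod n])%N then (qv - qv^-1)^-1 *: (K i * Ki i.+1 - Ki i * K i.+1) else 0.
Proof. by case: HT => _ [_ [_ [_ []]]]. Qed.
Let E_E i j : ~~ (i == j.+1 %[mod n])%N -> ~~ (j == i.+1 %[mod n])%N ->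
  E i * E j = E j * E i.
Proof. by move=> h1 h2; case: HT => _ [_ [_ [_ [_ [/(_ i j h1 h2) []]]]]]. Qed.
Let K_prod : \prod_(1 <= i < n.+1) K i = (qv ^+ r)%:A.
Proof. by case: HT => _ [_ [_ [_ [_ [_ [_ []]]]]]]. Qed.
Let K_root i : \prod_(0 <= j < r.+1) (K i - (qv ^+ j)%:A) = 0.
Proof. by case: HT => _ [_ [_ [_ [_ [_ [_ [_]]]]]]]. Qed.

Local Notation wt := (has_weight n K).

Lemma has_weightE lam y j : (0 < j <= n)%N -> wt lam y ->
  wt (fun i => lam i + (i == j)%:Z - ((i == j.+1) || (i == 1%N) && (j == n))%:Z) (E j * y).
Proof.
move=> hj hy i hi; rewrite mulrA K_E -scalerAl -mulrA hy // -scalerAr scalerA.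
by rewrite -expfzDr ?qv_neq0 // (epspE n_gt1 hi hj); congr (_ ^ _ *: _); lia.
Qed.

Lemma has_weightF lam y j : (0 < j <= n)%N -> wt lam y ->
  wt (fun i => lam i - (i == j)%:Z + ((i == j.+1) || (i == 1%N) && (j == n))%:Z) (F j * y).
Proof.
move=> hj hy i hi; rewrite mulrA K_F -scalerAl -mulrA hy // -scalerAr scalerA.
by rewrite -expfzDr ?qv_neq0 // (epspE n_gt1 hi hj); congr (_ ^ _ *: _); lia.
Qed.

Lemma commEF_neq i j : (0 < i <= n)%N -> (0 < j <= n)%N -> i != j ->
  E i * F j = F j * E i.
Proof. by move=> hi hj ij; apply/eqP; rewrite -subr_eq0 E_F eqn_mod_range // (negPf ij). Qed.

Lemma commEF_weight lam y j : (0 < j < n)%N -> wt lam y ->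
  E j * (F j * y) - F j * (E j * y) = qint (lam j - lam j.+1) *: y.
Proof.
move=> /andP[j0 jn] hy; have hj : (0 < j <= n)%N by rewrite j0 ltnW.
rewrite !mulrA -mulrBl E_F eqxx -scalerAl mulrBl -!mulrA.
rewrite (has_weightKi Ki_K hy) // (hy j.+1) // -!scalerAr hy // (has_weightKi Ki_K hy) //.
rewrite !scalerA -scalerBl scalerA /qint mulrC -!expfzDr ?qv_neq0 //.
by rewrite opprB [- _ + _]addrC.
Qed.

Lemma comm_FE_E j k : (0 < j <= n)%N -> (0 < k <= n)%N -> k != j ->
  ~~ (j == k.+1 %[mod n])%N -> ~~ (k == j.+1 %[mod n])%N -> GRing.comm (F j * E j) (E k).
Proof.
move=> hj hk kj h1 h2; rewrite /GRing.comm -mulrA E_E // !mulrA.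
by rewrite -(commEF_neq hk hj kj).
Qed.

Lemma has_weight_Eprod_low lam y m : (m < n)%N -> wt lam y ->
  wt (fun i => lam i + (i == n)%:Z - (i == m.+1)%:Z)
     ((\prod_(k <- rev (iota 1 m)) E k) * (E n * y)).
Proof.
move=> + hy; elim: m => [|m IH] mn.
  by rewrite big_nil mul1r; apply: has_weight_eq (has_weightE _ hy) _ => [|i hi]; lia.
rewrite -[m.+1]addn1 iotaD rev_cat big_cat /= big_cons big_nil mulr1 -mulrA add1n.
by apply: has_weight_eq (has_weightE _ (IH _)) _ => [||i hi]; lia.
Qed.

Lemma has_weight_Eprod_high lam y m : (0 < m <= n)%N -> wt lam y ->
  wt (fun i => lam i + (i == m)%:Z - (i == n)%:Z) ((\prod_(m <= k < n) E k) * y).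
Proof.
move=> /andP[m0 mn] hy; rewrite -(subKn mn) in m0 *.
elim: (n - m)%N m0 => [|d IH] d_lt.
  by rewrite subn0 big_geq // mul1r; apply: (has_weight_eq hy) => i _; lia.
rewrite big_ltn; last by lia.
rewrite -mulrA (_ : (n - d.+1).+1 = n - d)%N; last by lia.
by apply: has_weight_eq (has_weightE _ (IH _)) _ => [||i hi]; lia.
Qed.

Definition rho_word : A :=
  (\prod_(r <= k < n) E k) * (\prod_(k <- rev (iota 1 r.-1)) E k) * E n.

Lemma has_weight_rho_word lam y : (0 < r <= n)%N -> wt lam y -> wt lam (rho_word * y).
Proof.
move=> /andP[r0 rn] hy; rewrite /rho_word -!mulrA.
have low := has_weight_Eprod_low (m := r.-1) _ hy.
apply: has_weight_eq (has_weight_Eprod_high _ (low _)) _ => [||i hi]; lia.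
Qed.

Lemma FaEaEbEa_weight lam W a : (0 < a)%N -> (a.+1 < n)%N -> wt lam W ->
  lam a = 0 -> lam a.+1 = 1 ->
  F a * (E a * (E a.+1 * (E a * W))) = E a * (E a.+1 * W).
Proof.
move=> a0 an hW lam_a lam_b.
have ha : (0 < a <= n)%N by lia.
have hb : (0 < a.+1 <= n)%N by lia.
have ha' : (0 < a < n)%N by lia.
have FaW : F a * W = 0.
  by apply: (has_weight_eq0 K_root (has_weightF ha hW) ha); lia.
have FaEaW : F a * (E a * W) = W.
  have := commEF_weight ha' hW; rewrite FaW mulr0 lam_a lam_b sub0r qintN1 scaleN1r.
  exact: oppr_inj.
have := commEF_weight ha' (has_weightE hb (has_weightE ha hW)).
rewrite [X in qint X](_ : _ = 0) ?qint0 ?scale0r; last by lia.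
move/eqP; rewrite subr_eq0 => /eqP <-.
by rewrite [F a * (E a.+1 * _)]mulrA -(commEF_neq hb ha) ?(gtn_eqF (ltnSn a)) // -mulrA FaEaW.
Qed.

Lemma EbEaFbEb_weight lam W a : (0 < a)%N -> (a.+2 <= n)%N -> wt lam W ->
  lam a.+1 = 1 -> lam a.+2 = 1 ->
  E a.+1 * (E a * (F a.+1 * (E a.+1 * W))) = E a * (E a.+1 * W).
Proof.
move=> a0 an hW lam_b lam_c.
have ha : (0 < a <= n)%N by lia.
have hb : (0 < a.+1 <= n)%N by lia.
have hc : (0 < a.+2 <= n)%N by lia.
have hb' : (0 < a.+1 < n)%N by lia.
have hX := has_weightE ha (has_weightE hb hW).
rewrite [E a * (F _ * _)]mulrA (commEF_neq ha hb) ?(ltn_eqF (ltnSn a)) // -mulrA.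
have := commEF_weight hb' hX.
rewrite [X in qint X](_ : _ = 1) ?qint1 ?scale1r; last by lia.
have -> : E a.+1 * (E a * (E a.+1 * W)) = 0.
  by apply: (has_weight_eq0 K_root (has_weightE hb hX) hc); lia.
by rewrite mulr0 subr0.
Qed.

Lemma FE_rho_word_one_omega a : (0 < a)%N -> (a.+2 <= r)%N -> (r < n)%N ->
  F a * E a * (rho_word * one_omega n r K Ki)
  = rho_word * (F a.+1 * E a.+1 * one_omega n r K Ki).
Proof.
move=> a0 ar rn; set u := one_omega n r K Ki.
have u_wt : wt (fun i => (omega r i)%:Z) u.
  exact: has_weight_one_omega Ki_K K_root K_comm K_prod (ltnW rn).
set P := \prod_(r <= k < n) E k.
set R1 := \prod_(k <- rev (iota a.+2 (r.-1 - a.+1))) E k.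
set R0 := \prod_(k <- rev (iota 1 a.-1)) E k.
have -> : rho_word = P * R1 * E a.+1 * E a * (R0 * E n).
  rewrite /rho_word (rev_iota_split a0); last by lia.
  by rewrite !big_cat /= !big_cons big_nil mulr1 !mulrA.
have FaEa_P : GRing.comm (F a * E a) P.
  rewrite /P big_seq; apply: commr_prod => k; rewrite mem_index_iota => hk.
  by apply: comm_FE_E; rewrite ?eqn_modS_range //; lia.
have FaEa_R1 : GRing.comm (F a * E a) R1.
  rewrite /R1 big_seq; apply: commr_prod => k; rewrite mem_rev mem_iota => hk.
  by apply: comm_FE_E; rewrite ?eqn_modS_range //; lia.
have FbEb_R0 : GRing.comm (F a.+1 * E a.+1) R0.
  rewrite /R0 big_seq; apply: commr_prod => k; rewrite mem_rev mem_iota => hk.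
  by apply: comm_FE_E; rewrite ?eqn_modS_range //; lia.
have FbEb_En : GRing.comm (F a.+1 * E a.+1) (E n).
  by apply: comm_FE_E; rewrite ?eqn_modS_range //; lia.
set W := R0 * (E n * u).
pose lam i := (omega r i)%:Z + (i == n)%:Z - (i == a)%:Z.
have W_wt : wt lam W.
  by apply: has_weight_eq (has_weight_Eprod_low (m := a.-1) _ u_wt) _ => [|i _]; rewrite ?/lam; lia.
have lam_a : lam a = 0 by rewrite /lam /omega ifT; lia.
have lam_b : lam a.+1 = 1 by rewrite /lam /omega ifT; lia.
have lam_c : lam a.+2 = 1 by rewrite /lam /omega ifT; lia.
have -> : F a * E a * (P * R1 * E a.+1 * E a * (R0 * E n) * u)
          = P * R1 * (F a * (E a * (E a.+1 * (E a * W)))).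
  by rewrite /W -!mulrA !(commr_mul2l _ FaEa_P, commr_mul2l _ FaEa_R1).
have -> : P * R1 * E a.+1 * E a * (R0 * E n) * (F a.+1 * E a.+1 * u)
          = P * R1 * (E a.+1 * (E a * (F a.+1 * (E a.+1 * W)))).
  by rewrite /W -!mulrA -(commr_mul2l _ FbEb_En) -(commr_mul2l _ FbEb_R0).
by rewrite (FaEaEbEa_weight a0 _ W_wt) ?(EbEaFbEb_weight a0 _ W_wt) //; lia.
Qed.

Lemma zeta_rhoE : zeta_rho n r E K Ki = rho_word * one_omega n r K Ki.
Proof. by []. Qed.

Lemma one_omega_zeta_rho : (0 < r <= n)%N ->
  one_omega n r K Ki * zeta_rho n r E K Ki = zeta_rho n r E K Ki.
Proof.
move=> /[dup] hr /andP[_ rn]; rewrite zeta_rhoE; apply: (mul_one_omega Ki_K).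
exact/(has_weight_rho_word hr)/(has_weight_one_omega Ki_K K_root K_comm K_prod rn).
Qed.

Lemma one_omega_zeta_s j : (0 < j < n)%N -> (r <= n)%N ->
  one_omega n r K Ki * zeta_s n r E F K Ki j = zeta_s n r E F K Ki j.
Proof.
move=> hj rn; have u_wt := has_weight_one_omega Ki_K K_root K_comm K_prod rn.
apply: (mul_one_omega Ki_K); rewrite /zeta_s mulrBl mul1r -scalerAl -mulrA.
apply: has_weight_lin (u_wt).
by apply: has_weight_eq (has_weightF _ (has_weightE _ u_wt)) _ => *; lia.
Qed.

End Weights.

Theorem corollary2p3p7 (A : algType Qv) (n r i : nat) (E F K Ki : nat -> A) :
  (3 <= r)%N -> (r < n)%N -> (1 < i)%N -> (i < r)%N ->
  T_rels n r E F K Ki ->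
  zeta_s n r E F K Ki i.-1 * zeta_rho n r E K Ki
  = zeta_rho n r E K Ki * zeta_s n r E F K Ki i.
Proof.
move=> r3 rn; case: i => [//|a] a0 ar HT.
have n1 : (1 < n)%N by lia.
have hr : (0 < r <= n)%N by lia.
rewrite {1}/zeta_s -mulrA (one_omega_zeta_rho HT n1 hr).
rewrite zeta_rhoE -mulrA (one_omega_zeta_s HT n1 _ (ltnW rn)); last by lia.
rewrite /zeta_s /= !mulrBl !mul1r mulrBr -!scalerAl -scalerAr.
by rewrite (FE_rho_word_one_omega HT n1) //; lia.
Qed.
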